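(* Let $\mathcal{U}=\{1,\dots,N\}$ be a set of domains, data $(\mathbf{x},u)\sim p(\mathbf{x},u)$ with $p(u=i)=1/N$ for all $i$, and let $E$ be an encoder with $\mathbf{e}=E(\mathbf{x})$. Let $w_{ij}>0$ ($i\ne j$) be weights, and for each ordered pair $i\ne j$ let $D_{ij}:\mathcal{Z}\to(0,1)$ be a pairwise discriminator. Define the value $$V(E,\{D_{ij}\})=\frac12\sum_{i\neq j} w_{ij}\Big(p(u=i)\,\mathbb{E}_{\mathbf{e}\mid u=i}[\log D_{ij}(\mathbf{e})]+p(u=j)\,\mathbb{E}_{\mathbf{e}\mid u=j}[\log(1-D_{ij}(\mathbf{e}))]\Big),$$ which is the objective $\mathbb{E}[\sum_{j\ne i} w_{ij}\log D_{ij}(E(\mathbf{x}))]$ of the min-max game $\min_E\max_{\{D_{ij}\}} V$. Then for every encoder $E$, $$\max_{\{D_{ij}\}} V(E,\{D_{ij}\})\ \ge\ -\frac{\log 2}{N}\sum_{i\ne j} w_{ij},$$ and this lower bound is tight: equality (the optimum of the min-max game) is achieved when $p(\mathbf{e}\mid u=i)=p(\mathbf{e}\mid u=j)$ for all $i,j$, equivalently $p(\mathbf{e}\mid u=i)=p(\mathbf{e})$ for all $i$.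
   Context: $\mathcal{Z}$ denotes the encoding space and $p(\mathbf{e}\mid u=i)$ the distribution of encodings of data from domain $i$. The weights $w_{ij}$ are meant to reflect pairwise domain distances from a domain taxonomy (e.g. $w_{ij}\propto 1/\mathbf{A}_{ij}$ with $\mathbf{A}_{ij}$ the taxonomy distance between domains), but the result holds for arbitrary positive weights. *)

From mathcomp Require Import all_boot all_order all_algebra.
From mathcomp Require Import all_classical all_reals all_analysis.
Set Implicit Arguments. Unset Strict Implicit. Unset Printing Implicit Defensive.
Import Order.TTheory GRing.Theory Num.Theory.
Local Open Scope classical_set_scope.
Local Open Scope ring_scope.

(* X : data space; Px i = p(x | u = i); E : encoder X -> Z; the joint law has
   p(u = i) = 1/N, so it is determined by the Px i. *)

Definition admissible_disc (N : nat) d' (Z : measurableType d') (R : realType)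
  (D : 'I_N -> 'I_N -> Z -> R) : Prop :=
  forall i j : 'I_N, i != j ->
    measurable_fun [set: Z] (D i j) /\ (forall z, 0 < D i j z < 1).

(* The value V(E, {D_ij}) (extended-real: expectations of log may be -oo). *)
Definition disc_value (N : nat) d (X : measurableType d) d' (Z : measurableType d')
  (R : realType) (w : 'I_N -> 'I_N -> R) (Px : 'I_N -> probability X R)
  (E : X -> Z) (D : 'I_N -> 'I_N -> Z -> R) : \bar R :=
  ((2%:R)^-1)%:E *
  (\sum_(i < N) \sum_(j < N | j != i)
     (w i j)%:E *
     (((N%:R)^-1)%:E * (\int[Px i]_x (ln (D i j (E x)))%:E)
      + ((N%:R)^-1)%:E * (\int[Px j]_x (ln (1 - D i j (E x)))%:E)))%E.

Definition max_disc_value (N : nat) d (X : measurableType d) d' (Z : measurableType d')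
  (R : realType) (w : 'I_N -> 'I_N -> R) (Px : 'I_N -> probability X R)
  (E : X -> Z) : \bar R :=
  ereal_sup [set disc_value w Px E D | D in [set D | admissible_disc D]].

Definition enc_dist (N : nat) d (X : measurableType d) d' (Z : measurableType d')
  (R : realType) (Px : 'I_N -> probability X R) (E : X -> Z) (i : 'I_N) :
  set Z -> \bar R := pushforward (Px i) E.

From mathcomp Require Import all_boot all_order all_algebra.
From mathcomp Require Import all_classical all_reals all_analysis.
From mathcomp Require Import ring lra measurable_realfun.
Set Implicit Arguments. Unset Strict Implicit. Unset Printing Implicit Defensive.
Import Order.TTheory GRing.Theory Num.Theory.
Local Open Scope classical_set_scope.
Local Open Scope ring_scope.

(* The constant discriminators D_ij = 1/2 are admissible and achieve the value
   -(ln 2 / N) * sum w_ij, whence the lower bound.  When all encodings e = E(x)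
   have the same law, E_i[ln D(e)] + E_j[ln (1 - D(e))] = E_i[ln (D(e) (1 - D(e)))]
   for every discriminator D, and t (1 - t) <= 1/4 bounds each pair term by
   -2 ln 2, so no discriminator does better than the constant one. *)

Lemma ln_add_ln1B_le (R : realType) (x : R) :
  0 < x < 1 -> ln x + ln (1 - x) <= - (ln 2 *+ 2).
Proof.
move=> /andP[x0 x1].
have x1B0 : 0 < 1 - x by rewrite subr_gt0.
have amgm : x * (1 - x) <= 4^-1.
  by rewrite -subr_ge0 (_ : _ - _ = (x - 2^-1) ^+ 2) ?sqr_ge0 //; field.
rewrite -lnM // -lnXn // -lnV ?posrE ?exprn_gt0 //.
by rewrite ler_ln ?posrE ?mulr_gt0 ?invr_gt0 ?exprn_gt0 // expr2 -natrM.
Qed.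

Lemma integral_cst_prob (R : realType) d (T : measurableType d)
  (P : probability T R) (r : R) : (\int[P]_x r%:E = r%:E)%E.
Proof. by rewrite integral_cst //= probability_setT mule1. Qed.

Lemma le1_integral_lnE (R : realType) d (T : measurableType d)
  (mu : {measure set T -> \bar R}) (f : T -> R) : (forall x, f x <= 1) ->
  (\int[mu]_x (ln (f x))%:E = - \int[mu]_x (- ln (f x))%:E)%E.
Proof.
move=> f_le1; rewrite -integral_ge0N => [|x _]; last by rewrite lee_fin oppr_ge0 ln_le0.
by apply: eq_integral => x _; rewrite -EFinN opprK.
Qed.

Lemma le1_integral_ln_le0 (R : realType) d (T : measurableType d)
  (mu : {measure set T -> \bar R}) (f : T -> R) : (forall x, f x <= 1) ->
  (\int[mu]_x (ln (f x))%:E <= 0)%E.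
Proof.
move=> f_le1; rewrite le1_integral_lnE // leeNl oppe0.
by apply: integral_ge0 => x _; rewrite lee_fin oppr_ge0 ln_le0.
Qed.

Lemma ge0_integral_comp_eq_pushforward (R : realType) d (T : measurableType d)
  d' (Z : measurableType d') (mu nu : {measure set T -> \bar R}) (E : T -> Z)
  (mE : measurable_fun setT E) (h : Z -> \bar R) :
  (forall A, measurable A -> pushforward mu E A = pushforward nu E A) ->
  measurable_fun setT h -> (forall z, (0 <= h z)%E) ->
  (\int[mu]_x h (E x) = \int[nu]_x h (E x))%E.
Proof.
move=> mu_nu mh h0.
have push (m : {measure set T -> \bar R}) :
    (\int[pushforward m E]_z h z = \int[m]_x h (E x))%E.
  by rewrite ge0_integral_pushforward ?preimage_setT.
rewrite -!push; apply: eq_measure_integral => A mA _.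
exact: mu_nu.
Qed.

Lemma integral_ln_add_ln1B_le (R : realType) d (X : measurableType d)
  d' (Z : measurableType d') (P Q : probability X R) (E : X -> Z)
  (mE : measurable_fun setT E) (g : Z -> R) (mg : measurable_fun setT g)
  (g01 : forall z, 0 < g z < 1) :
  (forall A, measurable A -> pushforward P E A = pushforward Q E A) ->
  (\int[P]_x (ln (g (E x)))%:E + \int[Q]_x (ln (1 - g (E x)))%:E
    <= (- (ln 2 *+ 2))%:E)%E.
Proof.
move=> PQ.
have g_le1 z : g z <= 1 by case/andP: (g01 z) => _ /ltW.
have gB_le1 z : 1 - g z <= 1 by case/andP: (g01 z) => /ltW; rewrite gerBl.
have mgB : measurable_fun setT (fun z => 1 - g z) by exact: measurable_funB.
(* Change of variables and additivity of the integral hold unconditionally for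
   the nonnegative integrands [- ln _]. *)
pose lnN (f : Z -> R) z := (- ln (f z))%:E.
have lnN_ge0 f : (forall z, f z <= 1) -> forall z, (0 <= lnN f z)%E.
  by move=> f_le1 z; rewrite lee_fin oppr_ge0 ln_le0.
have mlnN f : measurable_fun setT f -> measurable_fun setT (lnN f).
  by move=> mf; apply/measurable_EFinP/measurableT_comp/measurableT_comp.
have mlnNE f : measurable_fun setT f -> measurable_fun setT (lnN f \o E).
  by move=> mf; exact/measurableT_comp/mE/mlnN.
rewrite !le1_integral_lnE //.
rewrite -(ge0_integral_comp_eq_pushforward mE (h := lnN (fun z => 1 - g z)) PQ);
  [|exact: mlnN|exact: lnN_ge0].
rewrite -oppeD ?ge0_adde_def ?inE ?integral_ge0 // => [|x _|x _]; last 2 first.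
- exact: (lnN_ge0 g).
- exact: lnN_ge0.
rewrite -ge0_integralD //; first last.
- exact: mlnNE.
- by move=> x _; exact: lnN_ge0.
- exact: (mlnNE g).
- by move=> x _; exact: (lnN_ge0 g).
rewrite EFinN leeN2 -(integral_cst_prob P (ln 2 *+ 2)).
apply: ge0_le_integral => //.
- by move=> x _; rewrite lee_fin mulrn_wge0 // ln_ge0 // ler1n.
- exact: emeasurable_funD (mlnNE g mg) (mlnNE _ mgB).
- by move=> x _; rewrite -EFinD lee_fin -opprD lerNr ln_add_ln1B_le.
Qed.

Lemma admissible_disc_cst_half (R : realType) (N : nat) d' (Z : measurableType d') :
  admissible_disc (fun (_ _ : 'I_N) (_ : Z) => 2^-1 : R).
Proof.
move=> i j _; split; first exact: measurable_cst.
by move=> z; apply/andP; split; lra.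
Qed.

Section disc_value.
Context (R : realType) d (X : measurableType d) d' (Z : measurableType d') (N : nat).
Variables (w : 'I_N -> 'I_N -> R) (Px : 'I_N -> probability X R) (E : X -> Z).
Hypothesis N_gt0 : (0 < N)%N.

Definition disc_value_bound : \bar R :=
  (- (ln 2 / N%:R) * \sum_(i < N) \sum_(j < N | j != i) w i j)%:E.

Let pair_bound : R := N%:R^-1 * - (ln 2 *+ 2).

Lemma half_sum_pair_bound :
  (2^-1%:E * \sum_(i < N) \sum_(j < N | j != i) (w i j)%:E * pair_bound%:E =
   disc_value_bound)%E.
Proof.
under eq_bigr do rewrite sumEFin.
rewrite sumEFin -EFinM /pair_bound; congr EFin.
under eq_bigr do rewrite -mulr_suml.
rewrite -mulr_suml.
have N0 : N%:R != 0 :> R by rewrite pnatr_eq0 -lt0n.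
by rewrite mulr2n; field.
Qed.

Lemma disc_value_cst_half : disc_value w Px E (fun _ _ _ => 2^-1) = disc_value_bound.
Proof.
rewrite /disc_value -half_sum_pair_bound; congr (_ * _)%E.
apply: eq_bigr => i _; apply: eq_bigr => j _.
rewrite !integral_cst_prob -!EFinM /pair_bound; congr (EFin (_ * _)).
have -> : 1 - 2^-1 = 2^-1 :> R by field.
by rewrite lnV ?posrE // mulr2n; ring.
Qed.

Lemma disc_value_le_bound (D : 'I_N -> 'I_N -> Z -> R) :
  (forall i j, i != j -> 0 < w i j) -> measurable_fun setT E ->
  (forall i j A, measurable A -> enc_dist Px E i A = enc_dist Px E j A) ->
  admissible_disc D -> (disc_value w Px E D <= disc_value_bound)%E.
Proof.
move=> w_pos mE same_enc D_adm.
rewrite /disc_value -half_sum_pair_bound.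
apply: lee_wpmul2l; first by rewrite lee_fin invr_ge0.
apply: lee_sum => i _; apply: lee_sum => j ji.
have [mD D01] := D_adm i j ltac:(by rewrite eq_sym).
apply: lee_wpmul2l; first by rewrite lee_fin ltW // w_pos // eq_sym.
rewrite -le0_muleDr; first last.
- by apply: le1_integral_ln_le0 => x; case/andP: (D01 (E x)) => /ltW; rewrite gerBl.
- by apply: le1_integral_ln_le0 => x; case/andP: (D01 (E x)) => _ /ltW.
rewrite /pair_bound EFinM; apply: lee_wpmul2l; first by rewrite lee_fin invr_ge0.
exact: (integral_ln_add_ln1B_le mE mD D01 (same_enc i j)).
Qed.

End disc_value.

Theorem theorem4p3 (R : realType) (d : measure_display) (X : measurableType d)
  (d' : measure_display) (Z : measurableType d') (N : nat) (N_gt0 : (0 < N)%N)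
  (w : 'I_N -> 'I_N -> R) (w_pos : forall i j : 'I_N, i != j -> 0 < w i j)
  (Px : 'I_N -> probability X R) (E : X -> Z) (mE : measurable_fun [set: X] E) :
  let bound := (- (ln 2 / N%:R) * \sum_(i < N) \sum_(j < N | j != i) w i j)%:E in
  (bound <= max_disc_value w Px E)%E /\
  ((forall (i j : 'I_N) (A : set Z), measurable A ->
      enc_dist Px E i A = enc_dist Px E j A) ->
   max_disc_value w Px E = bound).
Proof.
have bound_le : (disc_value_bound w <= max_disc_value w Px E)%E.
  rewrite -(disc_value_cst_half w Px E N_gt0).
  apply: ereal_sup_ubound; exists (fun _ _ _ => 2^-1) => //.
  exact: admissible_disc_cst_half.
split=> // same_enc; apply/le_anti; rewrite bound_le andbT.
apply: ge_ereal_sup => _ [D D_adm <-].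
exact: disc_value_le_bound.
Qed.
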